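(* Let $B\subset GL_n(\mathbb{C})$ be the group of invertible upper triangular matrices acting on $\mathfrak{b}^*=\mathfrak{gl}_n/\mathfrak{n}^+$ by conjugation, $b\cdot s=bsb^{-1}$. Then $\mathbb{C}[\mathfrak{b}^*]^B=\mathbb{C}[\operatorname{tr}(s)]$.
   Context: $\mathfrak{n}^+$ denotes the strictly upper triangular $n\times n$ matrices; $\mathfrak{b}^*$ is identified with $\mathfrak{gl}_n/\mathfrak{n}^+$ (equivalently with lower triangular matrices), and conjugation by $B$ preserves $\mathfrak{n}^+$ so descends to the quotient. The trace is well defined on $\mathfrak{gl}_n/\mathfrak{n}^+$. *)

From HB Require Import structures.
From mathcomp Require Import all_boot all_algebra.
From mathcomp Require Import complex.
From mathcomp Require Import Rstruct.
From mathcomp Require Export mpoly.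
Set Implicit Arguments. Unset Strict Implicit. Unset Printing Implicit Defensive.
Import GRing.Theory Num.Theory.
Local Open Scope ring_scope.

Definition CC : numClosedFieldType := (Rdefinitions.R)[i].

(* Coordinates on gl_n = 'M[CC]_n: the variable with index
   mxvec_index i j is the (i,j) entry. *)
Definition coords (n : nat) (s : 'M[CC]_n) : 'I_(n * n) -> CC :=
  fun k => mxvec s ord0 k.

(* The coordinate with index k is a lower-triangular (i >= j) entry,
   i.e. a coordinate on b^* = gl_n / n^+. *)
Definition lowvar (n : nat) (k : 'I_(n * n)) : bool :=
  [exists i : 'I_n, exists j : 'I_n, (j <= i)%N && (k == mxvec_index i j)].

(* C[b^*]: polynomials on gl_n involving only the lower-triangular
   coordinates, i.e. polynomial functions on gl_n / n^+. *)
Definition bstar_poly (n : nat) (p : {mpoly CC[n * n]}) : bool :=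
  all (fun m : 'X_{1.. n * n} => [forall k, (m k != 0)%N ==> lowvar k]) (msupp p).

Definition borel (n : nat) (b : 'M[CC]_n) : bool :=
  (b \in unitmx) && [forall i : 'I_n, forall j : 'I_n, (j < i)%N ==> (b i j == 0)].

Definition B_invariant (n : nat) (p : {mpoly CC[n * n]}) : Prop :=
  forall b : 'M[CC]_n, borel b ->
  forall s : 'M[CC]_n, p.@[coords (b *m s *m invmx b)] = p.@[coords s].

Definition trace_poly (n : nat) : {mpoly CC[n * n]} :=
  \sum_(i < n) 'X_(mxvec_index i i).

From HB Require Import structures.
From mathcomp Require Import all_boot all_algebra.
From mathcomp Require Import complex.
From mathcomp Require Import Rstruct.
From mathcomp Require Import mpoly.
From mathcomp Require Import ring.
Set Implicit Arguments.
Unset Strict Implicit.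
Unset Printing Implicit Defensive.
Import GRing.Theory Num.Theory.
Local Open Scope ring_scope.

(* Conjugating by the torus element diag(mu^i) multiplies the entry (i, j) of
   s by mu^(i - j).  On lower-triangular entries this is a polynomial in mu,
   so p(s), being its value for every mu <> 0, is also its value at mu = 0,
   namely p(diag s).  Conjugating diag(d) plus ones in column 0 below the
   diagonal by 1 + e_0 (0, d_1, ..., d_(n-1)) moves every diagonal entry into
   position (0, 0), so p(s) = p(diag(tr s, 0, ..., 0)), a polynomial in tr s.
   As CC is infinite, this identity of functions is one of polynomials. *)

Lemma poly_natr_roots_eq0 (R : numDomainType) (q : {poly R}) :
  (forall k, q.[k.+1%:R] = 0) -> q = 0.
Proof.
move=> q0; apply: (@roots_geq_poly_eq0 _ _ [seq k.+1%:R | k <- iota 0 (size q)]).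
- by apply/allP => _ /mapP [k _ ->]; rewrite /root q0.
- by rewrite map_inj_uniq ?iota_uniq // => i j /eqP; rewrite eqr_nat => /eqP [].
- by rewrite size_map size_iota.
Qed.

Lemma base_expansion_inj (B k : nat) (a b : 'I_k -> nat) :
  (forall i, a i < B)%N -> (forall i, b i < B)%N ->
  (\sum_(i < k) a i * B ^ i = \sum_(i < k) b i * B ^ i)%N -> a =1 b.
Proof.
elim: k a b => [|k IH] a b aB bB; first by move=> _ [].
have shift (c : 'I_k.+1 -> nat) : (\sum_(i < k.+1) c i * B ^ i =
    (\sum_(i < k) c (lift ord0 i) * B ^ i) * B + c ord0)%N.
  rewrite big_ord_recl expn0 muln1 addnC big_distrl; congr (_ + _)%N.
  by apply: eq_bigr => i _; rewrite expnS mulnCA mulnC.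
rewrite !shift => eq_ab.
have e0 : a ord0 = b ord0.
  by move/(congr1 (modn^~ B)): eq_ab; rewrite /= !modnMDl !modn_small.
have B0 : (0 < B)%N by apply: leq_ltn_trans (aB ord0).
move: eq_ab; rewrite e0 => /addIn /eqP; rewrite eqn_pmul2r // => /eqP eq_ab.
move=> i; case: (unliftP ord0 i) => [j ->|-> //].
exact: (IH (a \o lift ord0) (b \o lift ord0) (fun _ => aB _) (fun _ => bB _) eq_ab).
Qed.

Lemma mpoly_eq0_of_meval (R : numDomainType) (k : nat) (p : {mpoly R[k]}) :
  (forall v, p.@[v] = 0) -> p = 0.
Proof.
move=> p0; set B := msize p.
pose enc (m : 'X_{1..k}) := (\sum_(i < k) m i * B ^ i)%N.
have digit_lt m i : m \in msupp p -> (m i < B)%N.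
  move=> mp; apply: leq_ltn_trans (msize_mdeg_lt mp).
  by rewrite mdegE (bigD1 i) //= leq_addr.
(* Kronecker substitution 'X_i |-> 'X^(B ^ i): injective on msupp p. *)
pose P : {poly R} := \sum_(m <- msupp p) p@_m *: 'X^(enc m).
have P0 : P = 0.
  apply: poly_natr_roots_eq0 => c.
  rewrite -(p0 (fun i => c.+1%:R ^+ (B ^ i))) mevalE /P horner_sum.
  apply: eq_bigr => m _; rewrite hornerZ hornerXn -prodrXr; congr (_ * _).
  by apply: eq_bigr => i _; rewrite -exprM mulnC.
apply/mpolyP => m; rewrite mcoeff0.
have [mp|/memN_msupp_eq0 //] := boolP (m \in msupp p).
move/(congr1 (fun q : {poly R} => q`_(enc m))): P0.
rewrite coef0 /P coef_sum (bigD1_seq m) ?msupp_uniq //= coefZ coefXn eqxx mulr1.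
rewrite big1_seq ?addr0 // => m' /andP [m'm m'p]; rewrite coefZ coefXn.
have [eq_enc|] := eqVneq; last by rewrite mulr0.
case/negP: m'm; apply/eqP/mnmP.
apply: (@base_expansion_inj B k (fun i => m' i) (fun i => m i)) (esym eq_enc) => i;
  exact: digit_lt.
Qed.

Lemma horner_meval_map_polyC (R : comNzRingType) (k : nat) (p : {mpoly R[k]})
    (w : 'I_k -> {poly R}) (t : R) :
  ((map_mpoly polyC p).@[w]).[t] = p.@[fun i => (w i).[t]].
Proof.
rewrite !mevalE (perm_big _ (msupp_map_mpoly _ (@polyC_inj R))) /= horner_sum.
apply: eq_bigr => m _; rewrite mcoeff_map_mpoly hornerCM horner_prod.
by congr (_ * _); apply: eq_bigr => i _; rewrite horner_exp.
Qed.

Lemma mulmx1_invmx (R : comUnitRingType) n (A B : 'M[R]_n) :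
  A *m B = 1%:M -> invmx A = B.
Proof.
move=> AB; have [Aunit _] := mulmx1_unit AB.
by rewrite -[invmx A]mulmx1 -AB mulmxA mulVmx // mul1mx.
Qed.

Section FirstRowUnipotent.
Variables (R : comNzRingType) (n : nat).
Implicit Types (u : 'rV[R]_n.+1) (s : 'M[R]_n.+1) (i j : 'I_n.+1).

Definition row0_unipotent u : 'M[R]_n.+1 := 1%:M + delta_mx 0 0 *m u.

Lemma delta0_mulmx (v : 'rV[R]_n.+1) i j :
  (delta_mx 0 0 *m v : 'M[R]_n.+1) i j = (i == 0)%:R * v 0 j.
Proof. by rewrite mxE big_ord1 mxE eqxx andbT. Qed.

Lemma row0_unipotent_lower0 u i j : (j < i)%N -> row0_unipotent u i j = 0.
Proof.
move=> lt_ji; rewrite mxE delta0_mulmx !mxE.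
have /negPf -> : i != j by rewrite neq_ltn lt_ji orbT.
have /negPf -> : i != 0 by rewrite -(inj_eq val_inj) -lt0n (leq_ltn_trans _ lt_ji).
by rewrite mul0r addr0.
Qed.

Lemma row0_unipotentN_mul u : u 0 0 = 0 ->
  row0_unipotent u *m row0_unipotent (- u) = 1%:M.
Proof.
move=> u00; rewrite /row0_unipotent mulmxDl !mulmxDr mul1mx mulmx1.
rewrite -!mulmxA (mulmxA u) -colE.
have -> : col 0 u = 0 by apply/matrixP => i j; rewrite !ord1 !mxE.
by rewrite mul0mx mulmx0 addr0 mulmxN mul1mx subrK.
Qed.

Lemma mulmx_delta0 (A : 'M[R]_n.+1) (v : 'rV[R]_n.+1) i j :
  (A *m (delta_mx 0 0 *m v)) i j = A i 0 * v 0 j.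
Proof. by rewrite mulmxA -colE mxE big_ord1 mxE. Qed.

Lemma row0_unipotent_conj_diag u s i : u 0 0 = 0 ->
  (row0_unipotent u *m s *m row0_unipotent (- u)) i i =
  if i == 0 then s 0 0 + \sum_k u 0 k * s k 0 else s i i - u 0 i * s i 0.
Proof.
move=> u00; pose e : 'cV[R]_n.+1 := delta_mx 0 0.
have -> : row0_unipotent u *m s *m row0_unipotent (- u) =
    s + s *m (e *m - u) + e *m (u *m s) + (e *m (u *m s)) *m (e *m - u).
  rewrite /row0_unipotent /e mulmxDl mul1mx !mulmxDr mulmx1 !mulmxA.
  by rewrite !mulmxDl addrACA addrA.
have entryD (A B : 'M[R]_n.+1) k l : (A + B) k l = A k l + B k l by rewrite mxE.
rewrite !entryD !mulmx_delta0 !delta0_mulmx !mxE.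
have [-> | _] := eqVneq i 0; last by rewrite !mul0r !addr0 mulrN mulrC.
by rewrite u00 oppr0 !mulr0 !addr0 mul1r.
Qed.

End FirstRowUnipotent.

Lemma borel_of_mulmx1 n (b b' : 'M[CC]_n) :
  b *m b' = 1%:M -> (forall i j : 'I_n, (j < i)%N -> b i j = 0) -> borel b.
Proof.
move=> bb' b_upper; apply/andP; split; first by have [] := mulmx1_unit bb'.
by apply/forallP => i; apply/forallP => j; apply/implyP => /b_upper ->.
Qed.

Lemma meval_coords_lower n (p : {mpoly CC[n * n]}) (s s' : 'M[CC]_n) :
  bstar_poly p -> (forall i j : 'I_n, (j <= i)%N -> s i j = s' i j) ->
  p.@[coords s] = p.@[coords s'].
Proof.
move=> p_bstar eq_ss'; rewrite !mevalE; apply: eq_big_seq => m mp.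
congr (_ * _); apply: eq_bigr => k _.
have [-> | mk0] := eqVneq (m k) 0%N; first by rewrite !expr0.
move/allP: p_bstar => /(_ m mp) /forallP /(_ k) /implyP /(_ mk0).
case/existsP => i /existsP [j /andP [le_ji /eqP ->]].
by rewrite /coords !mxvecE eq_ss'.
Qed.

Lemma horner_meval_coords n (p : {mpoly CC[n * n]}) (A : 'M[{poly CC}]_n) t :
  ((map_mpoly polyC p).@[fun k => mxvec A 0 k]).[t] =
  p.@[coords (map_mx (horner^~ t) A)].
Proof.
rewrite horner_meval_map_polyC; apply: meval_eq => k.
by case/mxvec_indexP: k => i j; rewrite /coords !mxvecE mxE.
Qed.

Section InvariantPolynomial.
Variables (n : nat) (p : {mpoly CC[n * n]}).
Hypotheses (p_bstar : bstar_poly p) (p_inv : B_invariant p).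

Lemma meval_coords_conj (b b' s : 'M[CC]_n) :
  b *m b' = 1%:M -> (forall i j : 'I_n, (j < i)%N -> b i j = 0) ->
  p.@[coords (b *m s *m b')] = p.@[coords s].
Proof.
move=> bb' b_upper; rewrite -(mulmx1_invmx bb').
exact: p_inv (borel_of_mulmx1 bb' b_upper) s.
Qed.

Lemma meval_coords_diag (s : 'M[CC]_n) :
  p.@[coords s] = p.@[coords (diag_mx (\row_i s i i))].
Proof.
(* i - j truncates above the diagonal, where p does not look. *)
pose A : 'M[{poly CC}]_n := \matrix_(i, j) ((s i j)%:P * 'X^(i - j)).
pose P := (map_mpoly polyC p).@[fun k => mxvec A 0 k].
have torus mu : mu != 0 -> P.[mu] = p.@[coords s].
  move=> mu0; pose t (x : CC) : 'M[CC]_n := diag_mx (\row_i x ^+ i).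
  have tt : t mu *m t mu^-1 = 1%:M.
    rewrite mulmx_diag; apply/matrixP => i j.
    by rewrite !mxE -exprMn mulfV ?expr1n.
  have t_upper (i j : 'I_n) : (j < i)%N -> t mu i j = 0.
    by move=> lt_ji; rewrite !mxE (negPf (_ : i != j)) // neq_ltn lt_ji orbT.
  rewrite horner_meval_coords -(meval_coords_conj s tt t_upper).
  apply: meval_coords_lower => // i j le_ji.
  rewrite mul_mx_diag mul_diag_mx !mxE hornerCM hornerXn exprVn.
  rewrite -{2}(subnK le_ji) exprD; field; exact: expf_neq0.
have P_const : P = (p.@[coords s])%:P.
  apply/eqP; rewrite -subr_eq0; apply/eqP/poly_natr_roots_eq0 => k.
  by rewrite hornerD hornerN hornerC torus ?subrr ?pnatr_eq0.
move/(congr1 (horner^~ 0)): P_const; rewrite /= hornerC horner_meval_coords => <-.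
apply: meval_coords_lower => // i j le_ji; rewrite !mxE hornerCM hornerXn expr0n.
have [-> | ne_ij] := eqVneq i j; first by rewrite subnn mulr1 mulr1n.
rewrite subn_eq0 leqNgt ltn_neqAle le_ji andbT.
by rewrite eq_sym (inj_eq val_inj) ne_ij mulr0 mulr0n.
Qed.

Lemma meval_coords_eq_diag (s s' : 'M[CC]_n) :
  (forall i, s i i = s' i i) -> p.@[coords s] = p.@[coords s'].
Proof.
move=> eq_diag; rewrite meval_coords_diag [RHS]meval_coords_diag.
by congr (p.@[coords (diag_mx _)]); apply/rowP => i; rewrite !mxE.
Qed.

End InvariantPolynomial.

Lemma meval_coords_trace n (p : {mpoly CC[n.+1 * n.+1]}) (s : 'M[CC]_n.+1) :
  bstar_poly p -> B_invariant p ->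
  p.@[coords s] = p.@[coords (\tr s *: delta_mx 0 0)].
Proof.
move=> p_bstar p_inv.
pose s' : 'M[CC]_n.+1 := \matrix_(i, j) if i == j then s i i else (j == 0)%:R.
pose u : 'rV[CC]_n.+1 := \row_j if j == 0 then 0 else s j j.
have u00 : u 0 0 = 0 by rewrite mxE eqxx.
rewrite (meval_coords_eq_diag p_bstar p_inv (s' := s')); last first.
  by move=> i; rewrite mxE eqxx.
rewrite -(meval_coords_conj p_inv s' (row0_unipotentN_mul u00)
                            (row0_unipotent_lower0 u)).
apply: meval_coords_eq_diag => // i.
rewrite row0_unipotent_conj_diag // !mxE !eqxx andbb.
case: eqVneq => [_ | _]; last by rewrite mulr1 subrr mulr0.
rewrite mulr1 /mxtrace [in RHS](bigD1 0) //= [in LHS](bigD1 0) //=.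
rewrite !mxE eqxx mul0r add0r.
congr (_ + _); apply: eq_bigr => k k0.
by rewrite !mxE (negPf k0) eqxx mulr1.
Qed.

Lemma meval_trace_poly n (q : {poly CC}) (s : 'M[CC]_n) :
  ((map_poly (fun c : CC => c%:MP) q).[trace_poly n]).@[coords s] = q.[\tr s].
Proof.
have mevalC_coords : meval (coords s) \o (fun c : CC => c%:MP) =1 id.
  by move=> c; exact: mevalC.
rewrite -horner_map /= -map_poly_comp (eq_map_poly mevalC_coords) map_poly_id //.
rewrite /trace_poly raddf_sum; congr q.[_]; apply: eq_bigr => i _.
by rewrite /= mevalXU /coords mxvecE.
Qed.

Lemma mpoly_coords_inj n (p p' : {mpoly CC[n * n]}) :
  (forall s, p.@[coords s] = p'.@[coords s]) -> p = p'.
Proof.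
move=> eq_pp'; apply/eqP; rewrite -subr_eq0; apply/eqP/mpoly_eq0_of_meval => v.
have coordsK : coords (vec_mx (\row_k v k)) =1 v.
  by move=> k; rewrite /coords vec_mxK mxE.
by rewrite mevalB -!(meval_eq _ coordsK) eq_pp' subrr.
Qed.

Theorem mainTheorem7 (n : nat) (p : {mpoly CC[n * n]}) :
  bstar_poly p ->
  (B_invariant p <->
   exists q : {poly CC}, p = (map_poly (fun c : CC => c%:MP) q).[trace_poly n]).
Proof.
move=> p_bstar; split=> [p_inv | [q ->] b /andP [b_unit _] s]; last first.
  by rewrite !meval_trace_poly mxtrace_mulC mulmxA mulVmx ?mul1mx.
suff [q pE] : exists q : {poly CC}, forall s, p.@[coords s] = q.[\tr s].
  by exists q; apply: mpoly_coords_inj => s; rewrite pE meval_trace_poly.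
case: n p p_bstar p_inv => [|n] p p_bstar p_inv.
  by exists (p.@[coords 0])%:P => s; rewrite hornerC; apply: meval_eq => -[].
pose A : 'M[{poly CC}]_n.+1 := 'X *: delta_mx 0 0.
exists ((map_mpoly polyC p).@[fun k => mxvec A 0 k]) => s.
rewrite horner_meval_coords (meval_coords_trace s p_bstar p_inv).
congr (p.@[coords _]); apply/matrixP => i j; rewrite !mxE.
by case: (_ && _); rewrite ?mulr1 ?mulr0 ?hornerX ?horner0.
Qed.
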